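(* Let $\mathcal S=\{s_1,\dots,s_k\}\subseteq\Sigma^n$ be a set of pairwise matching strings and let $s^*\in\Sigma^n$ be a string matching every string of $\mathcal S$. Then for every $i\in[1..k]$, $\partial_S(s^*,s_i) = \partial_{Ham}(h_{s_1,s^*}, h_{s_1,s_i})$.
   Context: The swap at position $p$ exchanges the letters at positions $p$ and $p+1$. A swap permutation is a set of swaps at positions pairwise differing by at least $2$. Two strings of length $n$ are matching if some swap permutation transforms one into the other. For matching strings $u,v$, there is a unique valid swap permutation (one never swapping two identical letters) from $u$ to $v$; $h_{u,v}$ is its swap string, the binary string of length $n-1$ with $h_{u,v}[p]=1$ iff it swaps $(p,p+1)$. The swap distance $\partial_S(u,v)$ is $+\infty$ if $u,v$ are not matching, and otherwise the number of swaps in the valid swap permutation from $u$ to $v$ (the number of $1$s in $h_{u,v}$). $\partial_{Ham}$ is the Hamming distance. *)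

(* Strings are sequences over an alphabet Sigma : eqType;
   positions are 0-based naturals. *)
From mathcomp Require Import all_boot.
From Stdlib Require Import ClassicalEpsilon.
Set Implicit Arguments. Unset Strict Implicit. Unset Printing Implicit Defensive.

Section Swaps.
Variable Sigma : eqType.

(* a swap string h (bit p = 1 iff the swap at position p, exchanging p and p+1,
   is performed) describes a swap permutation iff no two swaps are adjacent
   (positions of swaps pairwise differ by at least 2). *)
Definition swap_perm (h : bitseq) : Prop :=
  forall p, nth false h p -> ~~ nth false h p.+1.

(* position of u whose letter lands at position p of the result *)
Definition swap_src (h : bitseq) (p : nat) : nat :=
  if nth false h p then p.+1
  else if (0 < p) && nth false h p.-1 then p.-1 else p.

Definition transforms (h : bitseq) (u v : seq Sigma) : Prop :=
  [/\ size v = size u, size h = (size u).-1, swap_perm h &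
      forall p, p < size u -> onth v p = onth u (swap_src h p)].

Definition valid_swaps (h : bitseq) (u : seq Sigma) : Prop :=
  forall p, nth false h p -> onth u p != onth u p.+1.

Definition matching (u v : seq Sigma) : Prop := exists h, transforms h u v.

(* h_{u,v}: the (unique, for matching u v) valid swap permutation from u to v *)
Definition swap_string (u v : seq Sigma) : bitseq :=
  epsilon (inhabits [::]) (fun h => transforms h u v /\ valid_swaps h u).

(* swap distance; None stands for +infinity *)
Definition swap_dist (u v : seq Sigma) : option nat :=
  if excluded_middle_informative (matching u v)
  then Some (count id (swap_string u v)) else None.
End Swaps.

Definition hamming (a b : bitseq) : nat :=
  count id [seq x.1 != x.2 | x <- zip a b].

From mathcomp Require Import all_boot.
From Stdlib Require Import ClassicalEpsilon.
Set Implicit Arguments. Unset Strict Implicit. Unset Printing Implicit Defensive.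

(* A valid swap string h from u to v is determined position by position: if no
   swap of h ends at p, then h[p] = 1 exactly when v[p] <> u[p]; a swap at p
   forces v[p] = u[p+1], v[p+1] = u[p] and h[p+1] = 0.  Hence for valid swap
   strings h1 : x -> y, h2 : x -> z and h3 : y -> z, induction on p gives
   h3 = h1 xor h2: if no swap ends at p, the letters x[p], y[p], z[p] decide
   (two swaps at p agree, since both bring x[p+1] to p); otherwise the swaps
   ending at p, known by induction, pin down all three bits at p.  With
   x = s_1, y = s*, z = s_i, the weight of h3 is the Hamming distance of h1
   and h2. *)

Lemma negb_eq_addb (T : eqType) (a b c : T) :
  (b != a -> c != a -> b = c) -> (c != b) = (b != a) (+) (c != a).
Proof.
case: (eqVneq b a) => [-> _|ba]; first by rewrite eq_sym.
case: (eqVneq c a) => [-> _|_ /(_ isT isT) ->]; first by rewrite eq_sym ba.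
by rewrite eqxx.
Qed.

Section Transforms.
Variable Sigma : eqType.
Implicit Types (h : bitseq) (u v : seq Sigma).

Lemma swap_src_involutive h p : swap_perm h -> swap_src h (swap_src h p) = p.
Proof.
rewrite /swap_src => sp; case hp: (nth false h p).
  by rewrite (negbTE (sp _ hp)) /= hp.
case: p hp => [|q] hp //=; first by rewrite hp.
by case hq: (nth false h q) => /=; rewrite ?hq ?hp.
Qed.

Lemma nth_swap_lt h u p :
  size h = (size u).-1 -> nth false h p -> p.+1 < size u.
Proof.
move=> sh hp; have : p < size h by apply: contraTT hp; rewrite -leqNgt => /(nth_default _) ->.
by rewrite sh; case: (size u).
Qed.

Lemma swap_src_lt h u p :
  size h = (size u).-1 -> p < size u -> swap_src h p < size u.
Proof.
move=> sh lp; rewrite /swap_src; case hp: (nth false h p); first exact: nth_swap_lt hp.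
by case: ifP => // _; apply: leq_ltn_trans lp; apply: leq_pred.
Qed.

Lemma transforms_sym h u v : transforms h u v -> transforms h v u.
Proof.
case=> suv sh sp E; split; rewrite ?suv // => p lp.
by rewrite E ?swap_src_involutive // swap_src_lt.
Qed.

Lemma matching_sym u v : matching u v -> matching v u.
Proof. by case=> h /transforms_sym; exists h. Qed.

Definition drop_idle_swaps h u : bitseq :=
  mkseq (fun p => nth false h p && (onth u p != onth u p.+1)) (size h).

Lemma nth_drop_idle_swaps h u p :
  nth false (drop_idle_swaps h u) p = nth false h p && (onth u p != onth u p.+1).
Proof.
rewrite /drop_idle_swaps; case: (ltnP p (size h)) => lp; first by rewrite nth_mkseq.
by rewrite !nth_default ?size_mkseq.
Qed.

Lemma transforms_drop_idle_swaps h u v :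
  transforms h u v -> transforms (drop_idle_swaps h u) u v.
Proof.
case=> suv sh sp E; split; rewrite ?size_mkseq //.
  by move=> p; rewrite !nth_drop_idle_swaps => /andP[/sp /negbTE ->].
move=> p lp; rewrite E // /swap_src !nth_drop_idle_swaps.
case hp: (nth false h p) => /=.
  case: eqVneq => //= idle.
  case: p lp hp idle => [|q] lp hp idle //=.
  by have := sp q; case: (nth false h q) => // /(_ isT); rewrite hp.
case: p lp hp => [|q] lp hp //=.
by case: (nth false h q) => //=; case: eqVneq.
Qed.

Lemma valid_drop_idle_swaps h u : valid_swaps (drop_idle_swaps h u) u.
Proof. by move=> p; rewrite nth_drop_idle_swaps => /andP[]. Qed.

Lemma swap_string_valid u v : matching u v ->
  transforms (swap_string u v) u v /\ valid_swaps (swap_string u v) u.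
Proof.
case=> h T; apply: (epsilon_spec (inhabits [::]) (fun h => transforms h u v /\ _)).
by exists (drop_idle_swaps h u); split; [apply: transforms_drop_idle_swaps | apply: valid_drop_idle_swaps].
Qed.

Section ValidSwaps.
Variables (h : bitseq) (u v : seq Sigma).
Hypotheses (Tuv : transforms h u v) (Vuv : valid_swaps h u).

Lemma onth_swap_left p : nth false h p -> onth v p = onth u p.+1.
Proof.
case: Tuv => _ sh _ E hp; have lp := nth_swap_lt sh hp.
by rewrite E ?(ltnW lp) // /swap_src hp.
Qed.

Lemma onth_swap_right p : nth false h p -> onth v p.+1 = onth u p.
Proof.
case: Tuv => _ sh sp E hp; have lp := nth_swap_lt sh hp.
by rewrite E // /swap_src (negbTE (sp _ hp)) hp.
Qed.

Lemma swap_next_false p : nth false h p -> nth false h p.+1 = false.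
Proof. by case: Tuv => _ _ sp _ /sp /negbTE. Qed.

Lemma nth_swap_fresh p : ~~ ((0 < p) && nth false h p.-1) ->
  nth false h p = (onth v p != onth u p).
Proof.
move=> fresh; case hp: (nth false h p).
  by rewrite (onth_swap_left hp) eq_sym Vuv.
case: Tuv => suv _ _ E; case: (ltnP p (size u)) => lp.
  by rewrite E // /swap_src hp (negbTE fresh) eqxx.
by rewrite !onth_default ?suv.
Qed.

End ValidSwaps.

Section SwapXor.
Variables (h1 h2 h3 : bitseq) (x y z : seq Sigma).
Hypotheses (T1 : transforms h1 x y) (V1 : valid_swaps h1 x).
Hypotheses (T2 : transforms h2 x z) (V2 : valid_swaps h2 x).
Hypotheses (T3 : transforms h3 y z) (V3 : valid_swaps h3 y).

Lemma swap_xor_fresh p :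
  ~~ ((0 < p) && nth false h1 p.-1) -> ~~ ((0 < p) && nth false h2 p.-1) ->
  ~~ ((0 < p) && nth false h3 p.-1) ->
  nth false h3 p = nth false h1 p (+) nth false h2 p.
Proof.
move=> f1 f2 f3.
rewrite (nth_swap_fresh T1 V1 f1) (nth_swap_fresh T2 V2 f2) (nth_swap_fresh T3 V3 f3).
apply: negb_eq_addb; rewrite -(nth_swap_fresh T1 V1 f1) -(nth_swap_fresh T2 V2 f2).
by move=> /(onth_swap_left T1) -> /(onth_swap_left T2) ->.
Qed.

Lemma nth_swap_xor p : nth false h3 p = nth false h1 p (+) nth false h2 p.
Proof.
elim: p => [|q IH]; first exact: swap_xor_fresh.
case a1: (nth false h1 q) IH; case a2: (nth false h2 q) => /= a3.
- rewrite (swap_next_false T1 a1) (swap_next_false T2 a2) (nth_swap_fresh T3 V3);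
    last by rewrite /= a3.
  by rewrite (onth_swap_right T1 a1) (onth_swap_right T2 a2) eqxx.
- rewrite (swap_next_false T1 a1) (swap_next_false T3 a3) (nth_swap_fresh T2 V2);
    last by rewrite /= a2.
  by rewrite (onth_swap_right T3 a3) (onth_swap_left T1 a1) eqxx.
- rewrite (swap_next_false T2 a2) (swap_next_false T3 a3) (nth_swap_fresh T1 V1);
    last by rewrite /= a1.
  by rewrite -(onth_swap_left T3 a3) (onth_swap_left T2 a2) eqxx.
- by apply: swap_xor_fresh; rewrite /= ?a1 ?a2 ?a3.
Qed.

End SwapXor.
End Transforms.

Lemma hamming_xor (a b c : bitseq) :
  size a = size c -> size b = size c ->
  (forall p, nth false c p = nth false a p (+) nth false b p) ->
  hamming a b = count id c.
Proof.
move=> sa sb E; congr count; apply: (@eq_from_nth _ false).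
  by rewrite size_map size_zip sa sb minnn.
move=> p; rewrite size_map size_zip sa sb minnn => lp.
by rewrite (nth_map (false, false)) ?size_zip ?sa ?sb ?minnn // nth_zip ?sa ?sb // E negb_eqb.
Qed.

Theorem mainTheorem3 (Sigma : eqType) (n k : nat) (s : nat -> seq Sigma)
    (sstar : seq Sigma) :
  (forall i, 1 <= i <= k -> size (s i) = n) ->
  (forall i j, 1 <= i <= k -> 1 <= j <= k -> s i = s j -> i = j) ->
  (forall i j, 1 <= i <= k -> 1 <= j <= k -> matching (s i) (s j)) ->
  size sstar = n ->
  (forall i, 1 <= i <= k -> matching sstar (s i)) ->
  forall i, 1 <= i <= k ->
    swap_dist sstar (s i) =
    Some (hamming (swap_string (s 1) sstar) (swap_string (s 1) (s i))).
Proof.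
move=> _ _ Mss _ Ms i ik.
have k1 : 1 <= 1 <= k by case/andP: ik => a b; rewrite leqnn (leq_trans a b).
have M3 := Ms i ik.
have [T1 V1] := swap_string_valid (matching_sym (Ms 1 k1)).
have [T2 V2] := swap_string_valid (Mss 1 i k1 ik).
have [T3 V3] := swap_string_valid M3.
have [sy s1 _ _] := T1; have [_ s2 _ _] := T2; have [_ s3 _ _] := T3.
rewrite /swap_dist; case: (excluded_middle_informative (matching sstar (s i))) => [m|NM]; last by case: (NM M3).
congr Some; symmetry; apply: hamming_xor; last exact: nth_swap_xor T1 V1 T2 V2 T3 V3.
- by rewrite s1 s3 sy.
- by rewrite s2 s3 sy.
Qed.
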